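(* Let $n>0$ be an integer of length $l$. Then $$\lim_{k\to\infty}\ \sum_{\substack{m:\ \mathrm{ld}_l(m)=n\\ k(m)=k}}\frac1m=b\log\!\left(1+\frac1n\right),$$ where the sum is over all positive integers $m$ whose base-$b$ representation starts with that of $n$ and contains exactly $k$ occurrences of $d$.
   Context: Fix $b\ge2$ and $d\in\{0,\dots,b-1\}$. For an integer $n\ge0$, its length $l(n)$ is the smallest $l\ge0$ with $n<b^l$, and $k(n)$ is the number of occurrences of $d$ in its base-$b$ representation without leading zeros. For $m>0$ of length $q\ge l$, $\mathrm{ld}_l(m)=\lfloor m/b^{q-l}\rfloor$ (only $m$ of length $\ge l$ are considered). *)

From mathcomp Require Import all_boot all_order all_algebra.
From mathcomp Require Import all_classical all_reals all_analysis.
Set Implicit Arguments. Unset Strict Implicit. Unset Printing Implicit Defensive.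

(* base-b digits of n, least significant first, without leading zeros
   (digits of 0 is the empty list). Fuel n suffices since n %/ b < n for b >= 2. *)
Fixpoint digits_aux (b fuel n : nat) : seq nat :=
  match fuel with
  | 0 => [::]
  | f.+1 => if n == 0 then [::] else (n %% b) :: digits_aux b f (n %/ b)
  end.
Definition digits (b n : nat) : seq nat := digits_aux b n n.

Definition blen (b n : nat) : nat := size (digits b n).

Definition kcount (b d n : nat) : nat := count (pred1 d) (digits b n).

Definition ld (b l m : nat) : nat := m %/ b ^ (blen b m - l).

Definition admissible (b d n k m : nat) : bool :=
  [&& 0 < m, blen b n <= blen b m, ld b (blen b n) m == n & kcount b d m == k].

From mathcomp Require Import all_boot all_order all_algebra.
From mathcomp Require Import all_classical all_reals all_analysis.
From mathcomp Require Import zify ring lra.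
Set Implicit Arguments. Unset Strict Implicit. Unset Printing Implicit Defensive.
Import Order.TTheory GRing.Theory Num.Theory.
Import numFieldNormedType.Exports.

(* The admissible [m] with [j] digits more than [n] fill the block
   [[n b^j, (n+1) b^j)].  Reading the [j] extra digits as independent uniform
   digits, the [1/m]-mass of those with exactly [k] digits [d] lies between
   [p_j / (n+1)] and [p_j / n], where [p_j] is the probability that a counter
   started at [k(n)] and incremented at every digit [d] ends at [k].  Summed
   over [j], [p_j] is the expected time the counter spends at [k], which tends
   to [b] (a geometric waiting time of parameter [1/b]) once [k >= k(n)].
   Applying this to every prefix [n b^L + v], [v < b^L], instead of [n] shows
   that for [k >= k(n) + L] the series lies between the two Riemann sums
   [b sum_v 1/(n b^L + v + 1)] and [b sum_v 1/(n b^L + v)] of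
   [b log (1 + 1/n)], which differ by at most [b / (L + 1)]. *)

Section Digits.
Variables (b d : nat).
Hypothesis b_gt1 : (1 < b)%N.

Lemma expb_gt0 j : (0 < b ^ j)%N.
Proof. by rewrite expn_gt0; lia. Qed.

Lemma digits_aux_fuel f1 f2 m : (m <= f1)%N -> (m <= f2)%N ->
  digits_aux b f1 m = digits_aux b f2 m.
Proof.
elim: f1 f2 m => [|f1 IH] [|f2] m //.
- by rewrite leqn0 => /eqP ->.
- by rewrite leqn0 => _ /eqP ->.
rewrite /=; case: eqP => // /eqP; rewrite -lt0n => m_gt0 m_f1 m_f2.
by congr (_ :: _); apply: IH; have := ltn_Pdiv b_gt1 m_gt0; lia.
Qed.

Lemma digits_cons m : (0 < m)%N -> digits b m = (m %% b) :: digits b (m %/ b).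
Proof.
case: m => [//|m] _; rewrite /digits /=; congr (_ :: _).
by apply: digits_aux_fuel; have := ltn_Pdiv b_gt1 (ltn0Sn m); lia.
Qed.

Lemma blen_cons m : (0 < m)%N -> blen b m = (blen b (m %/ b)).+1.
Proof. by move=> m_gt0; rewrite /blen digits_cons. Qed.

Lemma kcount_cons m : (0 < m)%N ->
  kcount b d m = ((m %% b == d) + kcount b d (m %/ b))%N.
Proof. by move=> m_gt0; rewrite /kcount digits_cons. Qed.

Lemma kcount_snoc N a : (0 < N)%N -> (a < b)%N ->
  kcount b d (N * b + a) = ((a == d) + kcount b d N)%N.
Proof.
move=> N_gt0 a_lt_b; rewrite kcount_cons; last by rewrite addn_gt0 muln_gt0 N_gt0; lia.
by rewrite modnMDl modn_small // divnMDl ?divn_small ?addn0 //; lia.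
Qed.

Lemma kcount_le_divn_exp j m : (kcount b d m <= kcount b d (m %/ b ^ j) + j)%N.
Proof.
elim: j m => [|j IH] m; first by rewrite expn0 divn1 addn0.
have kcount_divb : (kcount b d m <= (kcount b d (m %/ b)).+1)%N.
  case: (posnP m) => [->|m_gt0]; first by rewrite div0n.
  by rewrite kcount_cons //; case: (_ == _).
by rewrite expnS divnMA; have := IH (m %/ b); lia.
Qed.

Lemma blen_divn_exp j m : (0 < m %/ b ^ j)%N -> blen b m = (blen b (m %/ b ^ j) + j)%N.
Proof.
elim: j m => [|j IH] m; first by rewrite expn0 divn1 addn0.
rewrite expnS divnMA => q_gt0.
have mb_gt0 : (0 < m %/ b)%N by case: (posnP (m %/ b)) q_gt0 => // ->; rewrite div0n.
have m_gt0 : (0 < m)%N by case: (posnP m) mb_gt0 => // ->; rewrite div0n.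
by rewrite blen_cons // (IH _ q_gt0) addnS.
Qed.

End Digits.

Local Open Scope classical_set_scope.
Local Open Scope ring_scope.

Lemma natr_pred (R : pzRingType) m : (0 < m)%N -> (m.-1)%:R = m%:R - 1 :> R.
Proof. by move=> m_gt0; rewrite -subn1 natrB. Qed.

Lemma big_nat_block (V : nmodType) (h : nat -> V) c M :
  \sum_(0 <= i < c * M) h i = \sum_(0 <= a < c) \sum_(0 <= i < M) h (a * M + i)%N.
Proof.
rewrite big_nat_mul; apply: eq_bigr => a _.
rewrite -{1}(add0n (a * M)%N) big_addn mulSn addnK.
by apply: eq_bigr => i _; rewrite addnC.
Qed.

Lemma cvgn_sum_nat (R : numFieldType) (f : nat -> nat -> R) (l : nat -> R) M :
  (forall v, (v < M)%N -> f v @ \oo --> l v) ->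
  (fun J => \sum_(0 <= v < M) f v J) @ \oo --> \sum_(0 <= v < M) l v.
Proof.
move=> f_cvg; rewrite big_nat_cond; under eq_fun do rewrite big_nat_cond.
apply: (@cvg_big _ _ _ _ (fun v => (0 <= v < M)%N && true) add_continuous) => // v.
by rewrite andbT => /andP[_]; apply: f_cvg.
Qed.

Lemma ln_succ_sub_ln (R : realType) (m : nat) : (0 < m)%N ->
  (m.+1%:R : R)^-1 <= ln (m.+1%:R : R) - ln (m%:R : R) <= (m%:R)^-1.
Proof.
rewrite -(ltr0n R) -natr1; set x : R := m%:R => x_gt0; apply/andP; split.
- suff : ln x - ln (x + 1) <= - (x + 1)^-1 by lra.
  have -> : ln x - ln (x + 1) = ln (1 + - (x + 1)^-1).
    by rewrite -ln_div ?posrE; [congr ln; field | |]; lra.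
  by apply: le_ln1Dx; rewrite ltrNl opprK invf_lt1; lra.
- have -> : ln (x + 1) - ln x = ln (1 + x^-1).
    by rewrite -ln_div ?posrE; [congr ln; field | |]; lra.
  by apply: le_ln1Dx; apply: lt_le_trans (_ : 0 <= _); [lra | rewrite invr_ge0 ltW].
Qed.

Section Layers.
Variables (R : realFieldType) (b d k : nat).

Definition kweight m : R := if kcount b d m == k then (m%:R)^-1 else 0.

Definition layer N j : R := \sum_(0 <= i < b ^ j) kweight (N * b ^ j + i).

Lemma layer0 N : layer N 0 = kweight N.
Proof. by rewrite /layer expn0 big_nat1 muln1 addn0. Qed.

Lemma layerD N j L :
  layer N (j + L) = \sum_(0 <= v < b ^ L) layer (N * b ^ L + v) j.
Proof.
rewrite /layer expnD mulnC big_nat_block; apply: eq_bigr => v _.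
by apply: eq_bigr => i _; congr kweight; ring.
Qed.

Lemma layerS N j : layer N j.+1 = \sum_(0 <= a < b) layer (N * b + a) j.
Proof. by rewrite -addn1 layerD expn1. Qed.

(* [hitp j c] is the probability that [c] plus the number of digits [d] among
   [j] independent uniform base-[b] digits equals [k]. *)
Fixpoint hitp j c : R :=
  if j is j'.+1 then ((b.-1)%:R * hitp j' c + hitp j' c.+1) / b%:R
  else (c == k)%:R.

Lemma hitp_ge0 j c : 0 <= hitp j c.
Proof.
elim: j c => [|j IH] c /=; first by rewrite ler0n.
by rewrite divr_ge0 ?addr_ge0 ?mulr_ge0.
Qed.

Lemma hitp_eq0 j c : (k < c)%N -> hitp j c = 0.
Proof.
elim: j c => [|j IH] c /= k_lt_c; first by case: eqP => //; lia.
by rewrite !IH ?mulr0 ?add0r ?mul0r //; lia.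
Qed.

Hypotheses (b_gt1 : (1 < b)%N) (d_lt_b : (d < b)%N).

Lemma sum_if_digit (x y : R) :
  \sum_(0 <= a < b) (if a == d then y else x) = (b.-1)%:R * x + y.
Proof.
rewrite big_mkord (bigD1 (Ordinal d_lt_b)) //= eqxx addrC; congr (_ + _).
rewrite (eq_bigr (fun=> x)) => [|a]; last by rewrite -val_eqE /= => /negbTE ->.
by rewrite sumr_const cardC1 card_ord mulr_natl.
Qed.

Lemma sum_hitp_digits N M j : (0 < N)%N -> (0 < M)%N ->
  \sum_(0 <= a < b) hitp j (kcount b d (N * b + a)) / (M * b)%:R =
  hitp j.+1 (kcount b d N) / M%:R.
Proof.
move=> N_gt0 M_gt0; rewrite -mulr_suml (eq_big_nat _ _ (F2 := fun a =>
  if a == d then hitp j (kcount b d N).+1 else hitp j (kcount b d N))); last first.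
  by move=> a /andP[_ a_lt_b]; rewrite kcount_snoc //; case: eqP.
by rewrite sum_if_digit /= natrM; field; rewrite !pnatr_eq0; apply/andP; split; lia.
Qed.

Lemma layer_le N j : (0 < N)%N -> layer N j <= hitp j (kcount b d N) / N%:R.
Proof.
elim: j N => [|j IH] N N_gt0.
  by rewrite layer0 /kweight /=; case: eqP; rewrite ?mul0r ?mul1r.
rewrite layerS -(sum_hitp_digits _ N_gt0 N_gt0); apply: ler_sum_nat => a _.
apply: le_trans (IH _ _) _; first by lia.
by rewrite ler_wpM2l ?hitp_ge0 // lef_pV2 ?posrE ?ltr0n ?ler_nat ?muln_gt0; lia.
Qed.

Lemma layer_ge N j : (0 < N)%N -> hitp j (kcount b d N) / N.+1%:R <= layer N j.
Proof.
elim: j N => [|j IH] N N_gt0.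
  rewrite layer0 /kweight /=; case: eqP; rewrite ?mul0r ?mul1r //.
  by rewrite lef_pV2 ?posrE ?ltr0n ?ler_nat.
rewrite layerS -(sum_hitp_digits _ N_gt0 (ltn0Sn N)); apply: ler_sum_nat => a /andP[_ a_lt_b].
apply: le_trans (IH _ _); last by lia.
by rewrite ler_wpM2l ?hitp_ge0 // lef_pV2 ?posrE ?ltr0n ?ler_nat ?muln_gt0; lia.
Qed.

End Layers.

Section Visits.
Variables (R : realType) (b k : nat).
Hypothesis b_gt1 : (1 < b)%N.

Definition visits J c : R := \sum_(0 <= j < J) hitp R b k j c.

Lemma visitsS J c :
  visits J.+1 c = (c == k)%:R + ((b.-1)%:R * visits J c + visits J c.+1) / b%:R.
Proof.
rewrite /visits big_nat_recl //= mulr_sumr -big_split /= mulr_suml.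
by congr (_ + _); apply: eq_bigr.
Qed.

Lemma visits_ge0 J c : 0 <= visits J c.
Proof. by apply: sumr_ge0 => j _; apply: hitp_ge0. Qed.

Lemma visits_eq0 J c : (k < c)%N -> visits J c = 0.
Proof. by move=> k_lt_c; rewrite /visits big1 // => j _; apply: hitp_eq0. Qed.

Lemma visits_le J c : visits J c <= b%:R.
Proof.
have b_ge2 : 2 <= b%:R :> R by rewrite (ler_nat R 2 b).
elim: J c => [|J IH] c; first by rewrite /visits big_geq.
have := IH c; have := IH c.+1; have := visits_ge0 J c; have := visits_ge0 J c.+1.
rewrite visitsS (natr_pred _ (ltnW b_gt1)); case: (eqVneq c k) => [->|_] /=.
- rewrite (visits_eq0 J (ltnSn k)) addr0 => *.
  by rewrite -lerBrDl ler_pdivrMr; [nra | lra].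
- by rewrite add0r => *; rewrite ler_pdivrMr; [nra | lra].
Qed.

Lemma visits_is_cvg c : cvgn (visits ^~ c).
Proof.
apply: nondecreasing_is_cvgn.
  by apply/nondecreasing_seqP => J; rewrite /visits big_nat_recr //= lerDl hitp_ge0.
by exists b%:R => _ [J _ <-]; apply: visits_le.
Qed.

(* In the limit the recursion of [visitsS] becomes [l c = b [c == k] + l c.+1]. *)
Lemma visits_cvg c : (c <= k)%N -> visits ^~ c @ \oo --> (b%:R : R).
Proof.
have b_ge2 : 2 <= b%:R :> R by rewrite (ler_nat R 2 b).
pose l c := limn (visits ^~ c).
have l_rec c' : l c' = (c' == k)%:R * b%:R + l c'.+1.
  have e : l c' = (c' == k)%:R + ((b.-1)%:R * l c' + l c'.+1) / b%:R.
    have := @visits_is_cvg c'; rewrite -cvg_shiftS => /cvg_unique; apply => //.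
    rewrite /=; under eq_fun do rewrite visitsS.
    apply: cvgD; first exact: cvg_cst.
    apply: cvgM; last exact: cvg_cst.
    by apply: cvgD; [apply: cvgM; [exact: cvg_cst | exact: visits_is_cvg] | exact: visits_is_cvg].
  have e' : l c' * b%:R = (c' == k)%:R * b%:R + ((b%:R - 1) * l c' + l c'.+1).
    by rewrite {1}e mulrDl divfK -?(natr_pred _ (ltnW b_gt1)) //; lra.
  nra.
have l_top : l k = b%:R.
  rewrite l_rec eqxx mul1r /l (_ : visits ^~ k.+1 = fun=> 0) ?lim_cst ?addr0 //.
  by apply: funext => J; apply: visits_eq0.
suff l_eq i : (i <= k)%N -> l (k - i)%N = b%:R.
  by move=> c_le_k; rewrite -(subKn c_le_k) -(l_eq _ (leq_subr c k)); apply: visits_is_cvg.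
elim: i => [|i IH] i_le_k; first by rewrite subn0.
rewrite l_rec (_ : (k - i.+1).+1 = k - i)%N ?IH; try lia.
by rewrite (_ : (k - i.+1 == k)%N = false) ?mul0r ?add0r //; apply/eqP; lia.
Qed.

End Visits.

Section Admissible.
Variables (R : realFieldType) (b d n k : nat).
Hypotheses (b_gt1 : (1 < b)%N) (n_gt0 : (0 < n)%N).

Definition in_layer j m := (n * b ^ j <= m < n.+1 * b ^ j)%N.

Lemma in_layer_divn j m : in_layer j m -> (m %/ b ^ j)%N = n.
Proof.
move=> /andP[lo hi]; apply/eqP; rewrite eqn_leq leq_divRL ?(expb_gt0 b_gt1) // lo /=.
by rewrite -ltnS ltn_divLR ?(expb_gt0 b_gt1) // andbT.
Qed.

Lemma admissible_in_layer j m : in_layer j m ->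
  admissible b d n k m = (kcount b d m == k).
Proof.
move=> m_in; have m_div := in_layer_divn m_in.
have m_len : blen b m = (blen b n + j)%N by rewrite (blen_divn_exp b_gt1 (j := j)) m_div.
rewrite /admissible /ld m_len addKn m_div eqxx leq_addr /=.
by case/andP: m_in => lo _; rewrite (leq_trans _ lo) // muln_gt0 n_gt0 (expb_gt0 b_gt1).
Qed.

Lemma admissible_layer m : admissible b d n k m -> exists j, in_layer j m.
Proof.
case/and4P => _ _ /eqP m_div _; exists (blen b m - blen b n)%N.
move: m_div; rewrite /ld /in_layer; set q := (b ^ _)%N => <-.
have q_gt0 : (0 < q)%N by exact: expb_gt0.
by rewrite -leq_divRL // leqnn /= -ltn_divLR.
Qed.

Definition adm_weight m : R := if admissible b d n k m then (m%:R)^-1 else 0.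

Lemma adm_weight_ge0 m : 0 <= adm_weight m.
Proof. by rewrite /adm_weight; case: ifP; rewrite ?invr_ge0. Qed.

Lemma adm_weight_out m : (forall j, ~~ in_layer j m) -> adm_weight m = 0.
Proof.
move=> m_out; rewrite /adm_weight; case: ifP => // /admissible_layer [j].
by have /negP := m_out j.
Qed.

Lemma sum_adm_weight_layer j :
  \sum_(n * b ^ j <= m < n.+1 * b ^ j) adm_weight m = layer R b d k n j.
Proof.
rewrite -{1}(add0n (n * b ^ j)%N) big_addn mulSn addnK.
apply: eq_big_nat => i /andP[_ i_lt].
rewrite addnC /adm_weight (admissible_in_layer (j := j)) // /in_layer mulSn; lia.
Qed.

(* Between the layers [j] and [j.+1] lies a gap [(n+1) b^j <= m < n b^(j+1)] of
   integers not starting with [n]. *)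
Lemma sum_adm_weight_layers J :
  \sum_(0 <= m < n.+1 * b ^ J) adm_weight m = \sum_(0 <= j < J.+1) layer R b d k n j.
Proof.
have exp_mono i j : (i <= j)%N -> (b ^ i <= b ^ j)%N by move=> ?; rewrite leq_pexp2l //; lia.
elim: J => [|J IH].
  rewrite big_nat1 -sum_adm_weight_layer expn0 !muln1 (big_cat_nat _ (n := n)) //=.
  rewrite big1_seq ?add0r // => m; rewrite mem_index_iota => /andP[_ m_lt_n].
  apply: adm_weight_out => j; apply/negP => /andP[lo _].
  by have := expb_gt0 b_gt1 j; move: lo m_lt_n; nia.
have lt_gap : (n.+1 * b ^ J <= n * b ^ J.+1)%N.
  by rewrite expnS; have := expb_gt0 b_gt1 J; move: n_gt0 b_gt1; nia.
have gap_lt : (n * b ^ J.+1 <= n.+1 * b ^ J.+1)%N by rewrite leq_mul2r leqnSn orbT.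
rewrite big_nat_recr //= -IH -sum_adm_weight_layer.
rewrite (big_cat_nat _ (n := (n.+1 * b ^ J)%N)) ?(leq_trans lt_gap) //=; congr (_ + _).
rewrite (big_cat_nat _ (n := (n * b ^ J.+1)%N)) //= big1_seq ?add0r // => m.
rewrite mem_index_iota => /andP[lo hi]; apply: adm_weight_out => j.
apply/negP => /andP[lo' hi']; case: (leqP j J) => j_le.
- by have := exp_mono _ _ j_le; move: lo hi'; nia.
- by have := exp_mono _ _ j_le; move: hi lo'; nia.
Qed.

End Admissible.

Section Bounds.
Variables (R : realType) (b d n : nat).
Hypothesis b_gt1 : (1 < b)%N.

Local Notation kn := (kcount b d n).

Lemma kcount_prefix_le L v : (v < b ^ L)%N -> (kcount b d (n * b ^ L + v) <= kn + L)%N.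
Proof.
move=> v_lt; have := kcount_le_divn_exp d b_gt1 L (n * b ^ L + v).
by rewrite (@in_layer_divn b n b_gt1 L) // /in_layer mulSn; lia.
Qed.

Lemma layer_eq0 k j : (kn + j < k)%N -> layer R b d k n j = 0.
Proof.
move=> k_gt; apply: big1_seq => i /andP[_]; rewrite mem_index_iota => /andP[_ i_lt].
by rewrite /kweight; case: eqP => // kc; have := kcount_prefix_le i_lt; lia.
Qed.

Hypothesis n_gt0 : (0 < n)%N.

Lemma prefix_gt0 L v : (0 < n * b ^ L + v)%N.
Proof. by rewrite addn_gt0 muln_gt0 n_gt0 (expb_gt0 b_gt1). Qed.

(* Once [k >= kn + L], the first [L] layers are empty and every later layer
   splits into the [b ^ L] layers of the prefixes of length [blen n + L]. *)
Lemma sum_adm_weight_regroup L k J : (kn + L <= k)%N ->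
  \sum_(0 <= m < n.+1 * b ^ (J + L)) adm_weight R b d n k m =
  \sum_(0 <= v < b ^ L) \sum_(0 <= j < J.+1) layer R b d k (n * b ^ L + v) j.
Proof.
move=> k_ge; rewrite sum_adm_weight_layers // (big_cat_nat _ (n := L)) //=; last lia.
rewrite big_nat_cond big1 ?add0r => [|j /andP[/andP[_ j_lt] _]]; last first.
  by apply: layer_eq0; lia.
rewrite -{1}(add0n L) big_addn -addSn addnK exchange_big /=.
by apply: eq_bigr => j _; apply: layerD.
Qed.

Hypothesis d_lt_b : (d < b)%N.

Lemma sum_layers_le k N J : (0 < N)%N ->
  \sum_(0 <= j < J) layer R b d k N j <= b%:R / N%:R.
Proof.
move=> N_gt0; apply: le_trans (_ : visits R b k J (kcount b d N) / N%:R <= _).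
  by rewrite /visits mulr_suml; apply: ler_sum_nat => j _; apply: layer_le.
by rewrite ler_wpM2r ?invr_ge0 // visits_le.
Qed.

Lemma sum_layers_ge k N J : (0 < N)%N ->
  visits R b k J (kcount b d N) / N.+1%:R <= \sum_(0 <= j < J) layer R b d k N j.
Proof.
move=> N_gt0; rewrite /visits mulr_suml.
by apply: ler_sum_nat => j _; apply: layer_ge.
Qed.

Definition harm_upper L : R := b%:R * \sum_(0 <= v < b ^ L) ((n * b ^ L + v)%N%:R)^-1.
Definition harm_lower L : R := b%:R * \sum_(0 <= v < b ^ L) ((n * b ^ L + v).+1%:R)^-1.

Lemma partial_adm_le_upper L k M : (kn + L <= k)%N ->
  \sum_(0 <= m < M) adm_weight R b d n k m <= harm_upper L.
Proof.
move=> k_ge; have M_le : (M <= n.+1 * b ^ (M + L))%N.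
  by have := ltn_expl (M + L) b_gt1; nia.
apply: le_trans (_ : \sum_(0 <= m < n.+1 * b ^ (M + L)) adm_weight R b d n k m <= _).
  rewrite [leRHS](big_cat_nat _ M_le) //= lerDl.
  by apply: sumr_ge0 => m _; apply: adm_weight_ge0.
rewrite sum_adm_weight_regroup // /harm_upper mulr_sumr.
by apply: ler_sum_nat => v _; apply: sum_layers_le; apply: prefix_gt0.
Qed.

Definition lower_approx L k J : R := \sum_(0 <= v < b ^ L)
  visits R b k J.+1 (kcount b d (n * b ^ L + v)) / (n * b ^ L + v).+1%:R.

Lemma lower_approx_le L k J : (kn + L <= k)%N ->
  lower_approx L k J <= \sum_(0 <= m < n.+1 * b ^ (J + L)) adm_weight R b d n k m.
Proof.
move=> k_ge; rewrite sum_adm_weight_regroup //.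
by apply: ler_sum_nat => v _; apply: sum_layers_ge; apply: prefix_gt0.
Qed.

Lemma lower_approx_cvg L k : (kn + L <= k)%N -> lower_approx L k @ \oo --> harm_lower L.
Proof.
move=> k_ge; rewrite /harm_lower /lower_approx mulr_sumr; apply: cvgn_sum_nat => v v_lt.
apply: cvgM; last exact: cvg_cst.
have := visits_cvg (R := R) b_gt1 (leq_trans (kcount_prefix_le v_lt) k_ge).
by rewrite -cvg_shiftS.
Qed.

End Bounds.

Section Harmonic.
Variables (R : realType) (b n : nat).
Hypotheses (b_gt1 : (1 < b)%N) (n_gt0 : (0 < n)%N).

(* [ln (1 + 1/n)] telescopes into the increments of [ln] over [[n b^L, (n+1) b^L]]. *)
Lemma harm_bounds L :
  harm_lower R b n L <= b%:R * ln (1 + (n%:R)^-1) <= harm_upper R b n L.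
Proof.
set N := (n * b ^ L)%N; set M := (b ^ L)%N.
have N_gt0 : (0 < N)%N by rewrite muln_gt0 n_gt0 expb_gt0.
have ln_tele : ln (1 + (n%:R)^-1) =
    \sum_(0 <= v < M) (ln (N + v).+1%:R - ln (N + v)%:R) :> R.
  rewrite (@telescope_sumr_eq _ 0 M (fun v => ln (N + v)%:R)) // => [|v _]; last first.
    by rewrite addnS.
  rewrite -ln_div ?posrE ?ltr0n ?addn0 //; last by rewrite addn_gt0 N_gt0.
  congr ln; rewrite /N /M natrD natrM; field.
  by rewrite !pnatr_eq0 -!lt0n n_gt0 expb_gt0.
have step v := ln_succ_sub_ln R (prefix_gt0 b_gt1 n_gt0 L v).
rewrite ln_tele /harm_lower /harm_upper; apply/andP; split;
  by rewrite ler_wpM2l ?ler0n //; apply: ler_sum_nat => v _; have /andP[] := step v.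
Qed.

Lemma harm_gap L : harm_upper R b n L - harm_lower R b n L <= b%:R / L.+1%:R.
Proof.
set N := (n * b ^ L)%N; set M := (b ^ L)%N.
have L_lt_M : (L < M)%N by apply: ltn_expl.
have M_le_N : (M <= N)%N by rewrite /N leq_pmull.
rewrite /harm_upper /harm_lower -mulrBr -sumrB.
rewrite (@telescope_sumr_eq _ 0 M (fun v => - ((N + v)%N%:R)^-1)) // => [|v _]; last first.
  by rewrite addnS opprK addrC.
rewrite addn0 ler_wpM2l ?ler0n //.
have inv_ge0 : 0 <= ((N + M)%N%:R : R)^-1 by rewrite invr_ge0 ler0n.
apply: (@le_trans _ _ ((N%:R)^-1)); first lra.
by rewrite lef_pV2 ?posrE ?ltr0n ?ler_nat; lia.
Qed.

End Harmonic.

Section Series.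
Variables (R : realType) (b d n : nat).
Hypotheses (b_gt1 : (1 < b)%N) (d_lt_b : (d < b)%N) (n_gt0 : (0 < n)%N).

Local Notation kn := (kcount b d n).

Definition adm_series k : \bar R :=
  \sum_(m <oo | admissible b d n k m) ((m%:R : R)^-1)%:E.

Lemma adm_partial_sumE k M :
  (\sum_(0 <= m < M | admissible b d n k m) ((m%:R : R)^-1)%:E)%E =
  (\sum_(0 <= m < M) adm_weight R b d n k m)%:E.
Proof. by rewrite sumEFin big_mkcond. Qed.

Lemma adm_series_bounds L k : (kn + L <= k)%N -> adm_series k \is a fin_num /\
  harm_lower R b n L <= fine (adm_series k) <= harm_upper R b n L.
Proof.
move=> k_ge; have term_ge0 m : (0 <= ((m%:R : R)^-1)%:E)%E by rewrite lee_fin invr_ge0.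
have S_le : (adm_series k <= (harm_upper R b n L)%:E)%E.
  apply: lime_le; first by apply: is_cvg_nneseries => m _ _.
  by apply: nearW => M; rewrite adm_partial_sumE lee_fin partial_adm_le_upper.
have approx_le J : ((lower_approx R b d n L k J)%:E <= adm_series k)%E.
  apply: le_trans (nneseries_lim_ge (n.+1 * b ^ (J + L))%N _); last by move=> m _ _.
  by rewrite adm_partial_sumE lee_fin lower_approx_le.
have S_fin : adm_series k \is a fin_num.
  rewrite ge0_fin_numE ?(le_lt_trans S_le) ?ltry //.
  apply: le_trans (approx_le 0%N); rewrite lee_fin.
  by apply: sumr_ge0 => v _; rewrite divr_ge0 ?visits_ge0.
split => //; apply/andP; split; last by rewrite -lee_fin fineK.
rewrite -(cvg_lim _ (lower_approx_cvg b_gt1 k_ge)) //.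
apply: limr_le; first exact: cvgP (lower_approx_cvg b_gt1 k_ge).
by apply: nearW => J; rewrite -lee_fin fineK.
Qed.

Lemma adm_series_close L k : (kn + L <= k)%N -> adm_series k \is a fin_num /\
  `|b%:R * ln (1 + (n%:R)^-1) - fine (adm_series k)| <= b%:R / L.+1%:R.
Proof.
move=> k_ge; have [S_fin /andP[lo_le le_hi]] := adm_series_bounds k_ge.
have /andP[lo_le' le_hi'] := harm_bounds R b_gt1 n_gt0 L.
have gap := harm_gap R b_gt1 n_gt0 L.
split => //; move: lo_le le_hi lo_le' le_hi' gap.
set s := fine _; set t := (b%:R * _)%R; set q := (b%:R / _)%R.
set lo := harm_lower _ _ _ _; set hi := harm_upper _ _ _ _.
by rewrite ler_norml => *; apply/andP; split; lra.
Qed.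

End Series.

Local Open Scope ereal_scope.

Theorem mainTheorem16 (R : realType) (b d n : nat)
  (hb : (2 <= b)%N) (hd : (d < b)%N) (hn : (0 < n)%N) :
  (fun k : nat => \sum_(m <oo | admissible b d n k m) ((m%:R : R)^-1)%:E)
    @ \oo --> ((b%:R * ln (1 + (n%:R)^-1))%:E : \bar R).
Proof.
apply/fine_cvgP; split.
  apply: filterS (nbhs_infty_ge (kcount b d n + 0)) => k k_ge.
  by have [] := adm_series_close R hb hd hn k_ge.
apply/cvgrPdist_le => e e_gt0.
pose L := Num.truncn (b%:R / e).
apply: filterS (nbhs_infty_ge (kcount b d n + L)) => k k_ge.
have [_ close] := adm_series_close R hb hd hn k_ge.
apply: le_trans close _; rewrite ler_pdivrMr ?ltr0n // mulrC -ler_pdivrMr //.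
exact/ltW/truncnS_gt.
Qed.
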